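(* For every $j\in\mathsf{R}\setminus\mathsf{R}'$ it holds: $\mathrm{Lroot}(j-1)=\mathrm{Lroot}(j)$, $\mathrm{end}(j-1)=\mathrm{end}(j)$, $\mathrm{Ltail}(j-1)=\mathrm{Ltail}(j)$, $\mathrm{efull}(j-1)=\mathrm{efull}(j)$, and $\mathrm{type}(j-1)=\mathrm{type}(j)$.
   Context: $T\in[0\mathinner{.\,.}\sigma)^n$ with $2\le\sigma<n^{1/7}$; $\tau=\lfloor\mu\log_\sigma n\rfloor$ for a fixed positive constant $\mu<1/6$ with $\tau\ge1$. $\mathrm{per}(S)$ is the shortest period of $S$. $\mathsf{R}=\{i\in[1\mathinner{.\,.}n-3\tau+2]:\mathrm{per}(T[i\mathinner{.\,.}i+3\tau-2])\le\tau/3\}$ and $\mathsf{R}'=\{j\in\mathsf{R}:j-1\notin\mathsf{R}\}$. For $j\in\mathsf{R}$: $\mathrm{end}(j)=\min\{j'\ge j:j'\notin\mathsf{R}\}+3\tau-2$; with $p=\mathrm{per}(T[j\mathinner{.\,.}j+3\tau-1))$, $\mathrm{Lroot}(j)=\min\{T[j+t\mathinner{.\,.}j+t+p):t\in[0\mathinner{.\,.}p)\}$ (lexicographic minimum); with $H=\mathrm{Lroot}(j)$, $T[j\mathinner{.\,.}\mathrm{end}(j))$ is uniquely written as $H'H^kH''$ with $H'$ a proper suffix and $H''$ a proper prefix of $H$, and $\mathrm{Ltail}(j)=|H''|$; $\mathrm{efull}(j)=\mathrm{end}(j)-\mathrm{Ltail}(j)$; $\mathrm{type}(j)=+1$ if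 $\mathrm{end}(j)\le n$ and $T[\mathrm{end}(j)]\succ T[\mathrm{end}(j)-|H|]$, and $\mathrm{type}(j)=-1$ otherwise. *)

From Stdlib Require Import Reals ZArith.
From mathcomp Require Import all_boot.
Set Implicit Arguments. Unset Strict Implicit. Unset Printing Implicit Defensive.

(* Text T is a seq nat; positions are 1-indexed: T[i] = nth 0 T (i-1). *)
Definition chr (T : seq nat) (i : nat) : nat := nth 0 T i.-1.

(* T[i .. j) (1-indexed, half-open), i.e. T[i], ..., T[j-1]. *)
Definition sub (T : seq nat) (i j : nat) : seq nat := drop i.-1 (take j.-1 T).

Definition is_period (S : seq nat) (p : nat) : bool :=
  all (fun k => nth 0 S k == nth 0 S (k + p)) (iota 0 (size S - p)).

(* shortest period per(S): the least p >= 1 that is a period of S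
   (|S| is always a period, so for nonempty S the search succeeds). *)
Definition per (S : seq nat) : nat :=
  find (fun p => (0 < p) && is_period S p) (iota 0 (size S).+1).

Definition tau_of (mu : R) (sigma n : nat) : nat :=
  Z.to_nat (Int_part (Rmult mu (Rdiv (ln (INR n)) (ln (INR sigma))))).

Section Runs.
Variables (T : seq nat) (tau : nat).
Let n := size T.

Definition inR (i : nat) : bool :=
  [&& 1 <= i, i + 3 * tau <= n + 2 & 3 * per (sub T i (i + 3 * tau - 1)) <= tau].

Definition inR' (j : nat) : bool := inR j && ~~ inR j.-1.

(* end(j) = min { j' >= j : j' notin R } + 3tau - 2 *)
Definition endR (j : nat) : nat :=
  j + find (fun d => ~~ inR (j + d)) (iota 0 (j + n).+3) + 3 * tau - 2.

Definition perj (j : nat) : nat := per (sub T j (j + 3 * tau - 1)).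

Fixpoint lexle (s t : seq nat) : bool :=
  match s, t with
  | [::], _ => true
  | _ :: _, [::] => false
  | a :: s', b :: t' => (a < b) || ((a == b) && lexle s' t')
  end.

Definition lexmin (s t : seq nat) : seq nat := if lexle s t then s else t.

Definition Lroot (j : nat) : seq nat :=
  let p := perj j in
  foldr lexmin (sub T j (j + p))
        [seq sub T (j + t) (j + t + p) | t <- iota 0 p].

(* S = H' H^k H'' with H' a proper suffix (length a < |H|) and
   H'' a proper prefix (length c < |H|) of H *)
Definition decomp (S H : seq nat) (a k c : nat) : bool :=
  [&& a < size H, c < size H &
      S == drop (size H - a) H ++ flatten (nseq k H) ++ take c H].

(* Ltail(j) = |H''| in the (unique) decomposition of T[j .. end(j)) *)
Definition Ltail (j : nat) : nat :=
  let H := Lroot j in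
  let S := sub T j (endR j) in
  find (fun c => has (fun a => has (fun k => decomp S H a k c)
                                   (iota 0 (size S).+1))
                     (iota 0 (size H)))
       (iota 0 (size H)).

Definition efull (j : nat) : nat := endR j - Ltail j.

Definition typeR (j : nat) : Z :=
  if (endR j <= n) && (chr T (endR j - size (Lroot j)) < chr T (endR j))
  then 1%Z else (-1)%Z.
End Runs.

(* If i and i+1 both lie in R, the windows of length 3tau-1 starting at i and i+1
   have shortest periods p, q <= tau/3 and overlap in 3tau-2 > p+q positions, so each
   window inherits the other's period and p = q.  The p rotations read from i+1 are
   those read from i shifted cyclically (the one starting at i+p equals the one at i),
   so both positions have the same minimal rotation H; and as i lies in R, both runs end
   at the same place.  Finally T[i..end) is T[i+1..end) with T[i] = T[i+|H|] prepended,
   which only lengthens the partial root H' (or completes it to a copy of H): the tail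
   H'', and with it efull and type, is unchanged. *)

From Stdlib Require Import Reals ZArith.
From mathcomp Require Import all_boot all_order zify.
Set Implicit Arguments. Unset Strict Implicit. Unset Printing Implicit Defensive.
Import Order.TTheory.

Definition periodic_on (A : Type) (f : nat -> A) (a b p : nat) : Prop :=
  forall k, a <= k -> k + p < b -> f k = f (k + p).

Lemma periodic_on_succ (A : Type) (f : nat -> A) a b p q :
  0 < q -> p + q < b - a -> periodic_on f a b p -> periodic_on f a.+1 b.+1 q ->
  periodic_on f a.+1 b.+1 p.
Proof.
move=> q0 pqb P Q k ak kb; case: (ltnP (k + p) b) => kpb; first by apply: P; lia.
have -> : f k = f (k - q) by rewrite (Q (k - q)); try congr f; lia.
rewrite (P (k - q)); try lia.
by rewrite (Q (k - q + p)); try congr f; lia.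
Qed.

Lemma periodic_on_pred (A : Type) (f : nat -> A) a b p q :
  0 < p -> p + q < b - a -> periodic_on f a b p -> periodic_on f a.+1 b.+1 q ->
  periodic_on f a b q.
Proof.
move=> p0 pqb P Q k ak kb; case: (ltnP a k) => ka; first by apply: Q; lia.
have -> : k = a by lia.
have -> : f (a + q) = f (a + q + p) by rewrite (P (a + q)) //; lia.
rewrite (P a); try lia.
by rewrite (Q (a + p)); try congr f; lia.
Qed.

Section Substrings.
Variable T : seq nat.

Lemma nth_sub i j k : 0 < i -> i + k < j -> nth 0 (sub T i j) k = chr T (i + k).
Proof. by move=> i0 ikj; rewrite /sub nth_drop nth_take /chr; [congr nth|]; lia. Qed.

Lemma size_sub i j : 0 < i <= j -> j <= size T + 1 -> size (sub T i j) = j - i.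
Proof. by move=> ij jn; rewrite /sub size_drop size_takel; lia. Qed.

Lemma sub_cons i j : 0 < i < j -> j <= size T + 1 -> sub T i j = chr T i :: sub T i.+1 j.
Proof.
move=> ij jn; rewrite /sub (drop_nth 0); last by rewrite size_takel; lia.
by rewrite nth_take /chr; [congr (_ :: drop _ _)|]; lia.
Qed.

Lemma is_period_subP i j p : 0 < i <= j -> j <= size T + 1 ->
  reflect (periodic_on (chr T) i j p) (is_period (sub T i j) p).
Proof.
move=> ij jn; rewrite /is_period size_sub //.
apply: (iffP allP) => [P k ik kpj | P k].
  have /eqP : nth 0 (sub T i j) (k - i) == nth 0 (sub T i j) (k - i + p).
    by apply: P; rewrite mem_iota; lia.
  by rewrite !nth_sub ?addnA ?subnKC //; lia.
rewrite mem_iota => /andP[_ kp]; apply/eqP.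
by rewrite !nth_sub ?addnA; [apply: P|..]; lia.
Qed.

Lemma sub_square i b p : 0 < i -> i + p + p <= b -> b <= size T + 1 ->
  periodic_on (chr T) i b p -> sub T i (i + p) = sub T (i + p) (i + p + p).
Proof.
move=> i0 ib bn P; apply: (@eq_from_nth _ 0) => [|k]; first by rewrite !size_sub; lia.
rewrite size_sub => [kp||]; try lia.
by rewrite !nth_sub -?addnA ?[p + k]addnC ?addnA; [apply: P|..]; lia.
Qed.
End Substrings.

Lemma find_iota_widen (a : pred nat) m m' :
  has a (iota 0 m) -> m <= m' -> find a (iota 0 m') = find a (iota 0 m).
Proof. by move=> am mm'; rewrite -(subnKC mm') iotaD find_cat am. Qed.

Lemma find_iotaS (a : pred nat) m :
  ~~ a 0 -> find a (iota 0 m.+1) = (find (fun d => a d.+1) (iota 0 m)).+1.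
Proof. by move=> /negbTE a0; rewrite /= a0 (iotaDl 1 0) find_map. Qed.

Lemma nth_find_iota (a : pred nat) m : has a (iota 0 m) -> a (find a (iota 0 m)).
Proof.
move=> am; have := nth_find 0 am; rewrite nth_iota // -[m in _ < m](size_iota 0).
by rewrite -has_find.
Qed.

Lemma before_find_iota (a : pred nat) m d : d < find a (iota 0 m) -> ~~ a d.
Proof.
move=> dF; have dm : d < m by rewrite (leq_trans dF) // -{2}(size_iota 0 m) find_size.
by have := before_find 0 dF; rewrite nth_iota // => ->.
Qed.

Lemma per_le S q : 0 < q <= size S -> is_period S q -> per S <= q.
Proof.
move=> qS Sq; rewrite /per leqNgt; apply/negP => /(before_find 0).
by rewrite nth_iota; [rewrite add0n Sq andbT; lia | lia].
Qed.

Lemma per_gt0_period S : 0 < size S -> 0 < per S /\ is_period S (per S).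
Proof.
move=> S0; set a := fun p => (0 < p) && is_period S p.
have hasS : has a (iota 0 (size S).+1).
  by apply/hasP; exists (size S); rewrite ?mem_iota /a ?S0 /is_period ?subnn //; lia.
by case/andP: (nth_find_iota hasS).
Qed.

Lemma lexleE (s t : seq nat) : lexle s t = (s <= t :> seqlexi nat)%O.
Proof.
elim: s t => [|a s IH] [|b t] //=; rewrite lexi_cons IH !leEnat.
by case: ltngtP.
Qed.

Lemma foldr_lexmin_mem x0 s : foldr lexmin x0 s \in x0 :: s.
Proof.
elim: s => [|a s IH] /=; first exact: mem_head.
rewrite /lexmin; case: ifP => _; first by rewrite !inE eqxx orbT.
by move: IH; rewrite !inE => /orP[] ->; rewrite ?orbT.
Qed.

Lemma foldr_lexmin_le x0 s y : y \in x0 :: s -> lexle (foldr lexmin x0 s) y.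
Proof.
elim: s y => [|a s IH] y /=; first by rewrite inE => /eqP ->; rewrite lexleE.
set m := foldr lexmin x0 s; set x := lexmin a m.
have le_a : lexle x a.
  rewrite /x /lexmin !lexleE; case: ifP => [_ | /negbT]; first exact: lexx.
  by rewrite -ltNge => /ltW.
have le_m : lexle x m by rewrite /x /lexmin; case: ifP => // _; rewrite lexleE.
rewrite !inE => /orP[/eqP -> | /orP[/eqP -> // | ys]]; move: le_m; rewrite !lexleE;
  by move/le_trans; apply; rewrite -lexleE IH // inE ?eqxx ?ys ?orbT.
Qed.

Lemma foldr_lexmin_eq x0 y0 s t : x0 \in s -> y0 \in t -> s =i t ->
  foldr lexmin x0 s = foldr lexmin y0 t.
Proof.
move=> x0s y0t st.
have mem_foldr u w : u \in w -> foldr lexmin u w \in w.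
  by move=> uw; have := foldr_lexmin_mem u w; rewrite inE => /predU1P[->|].
apply: (@le_anti _ (seqlexi nat)); rewrite -!lexleE.
by rewrite !foldr_lexmin_le // mem_behead // /= ?st ?mem_foldr // -st mem_foldr.
Qed.

Lemma map_iota1_rot (A : Type) (g : nat -> A) p : g p = g 0 ->
  map g (iota 1 p) = rot 1 (map g (iota 0 p)).
Proof.
case: p => [//|p] gp.
have -> : iota 1 p.+1 = rcons (iota 1 p) p.+1 by rewrite -cats1 -(addn1 p) iotaD add1n addn1.
by rewrite map_rcons /= rot1_cons gp.
Qed.

Section Decomposition.
Variable H : seq nat.

Lemma size_decomp S a k c : decomp S H a k c -> size S = a + k * size H + c.
Proof.
case/and3P => ha hc /eqP ->; rewrite !size_cat size_drop size_takel ?size_flatten; last lia.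
by rewrite /shape map_nseq sumn_nseq mulnC; lia.
Qed.

Lemma decomp_hasP S c : 0 < size H ->
  reflect (exists a k, decomp S H a k c)
    (has (fun a => has (fun k => decomp S H a k c) (iota 0 (size S).+1)) (iota 0 (size H))).
Proof.
move=> H0; apply: (iffP hasP) => [[a _ /hasP[k _ dec]] | [a [k dec]]]; first by exists a, k.
have := size_decomp dec; case/and3P: (dec) => ha _ _ Ssize.
exists a; first by rewrite mem_iota.
by apply/hasP; exists k; rewrite // mem_iota; nia.
Qed.

Lemma decomp_behead x S a k c : size H <= size S -> decomp (x :: S) H a k c ->
  exists a' k', decomp S H a' k' c.
Proof.
move=> HS dec; have /= Ssize := size_decomp dec; case/and3P: dec => ha hc /eqP E.
case: a ha E Ssize => [|a] ha E Ssize.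
  case: k E Ssize => [|k] E Ssize; first by lia.
  move: E; rewrite subn0 drop_size.
  case: H ha hc {HS Ssize} => [//|h H'] _ hc /= [_ ->].
  exists (size H'), k; apply/and3P; split => //=.
  by rewrite subSn // subnn /= drop0 -catA.
move: E; rewrite (drop_nth 0); last by lia.
case=> _ ->; exists a, k; apply/and3P; split => //; first by lia.
by rewrite subnSK //; lia.
Qed.

Lemma decomp_cons S a k c : 2 * size H <= size S -> decomp S H a k c ->
  exists a' k', decomp (nth 0 S (size H).-1 :: S) H a' k' c.
Proof.
move=> HS dec; have Ssize := size_decomp dec; case/and3P: dec => ha hc /eqP E.
case: k E Ssize => [|k] E Ssize; first by lia.
have -> : nth 0 S (size H).-1 = nth 0 H (size H - a.+1).
  rewrite E nth_cat size_drop ifN; last by lia.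
  by rewrite /= -catA nth_cat ifT; [congr nth|]; lia.
have head_drop : nth 0 H (size H - a.+1) :: drop (size H - a) H = drop (size H - a.+1) H.
  by rewrite [RHS](drop_nth 0) ?subnSK //; lia.
rewrite E -cat_cons head_drop; case: (ltnP a.+1 (size H)) => [aH | Ha].
  by exists a.+1, k.+1; apply/and3P; split.
have -> : size H - a.+1 = 0 by lia.
exists 0, k.+2; apply/and3P; split => //; first by lia.
by rewrite subn0 drop_size drop0 /= -!catA.
Qed.
End Decomposition.

Section Runs.
Variables (T : seq nat) (tau : nat).

Lemma inR_bounds i : inR T tau i -> 0 < i /\ i + 3 * tau <= size T + 2.
Proof. by case/and3P. Qed.

Lemma endR_succ i : inR T tau i -> endR T tau i = endR T tau i.+1.
Proof.
move=> Ri; have [i0 _] := inR_bounds Ri.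
rewrite /endR find_iotaS ?addn0 ?Ri //.
rewrite (@eq_find _ _ (fun d => ~~ inR T tau (i.+1 + d))); last by move=> d; rewrite addnS.
rewrite (@find_iota_widen _ (i + size T).+2); try lia.
apply/hasP; exists (size T).+2; first by rewrite mem_iota; lia.
by apply/negP => /inR_bounds; lia.
Qed.

Lemma endR_bounds i : inR T tau i -> i + 3 * tau - 1 <= endR T tau i <= size T + 1.
Proof.
move=> Ri; have [i0 _] := inR_bounds Ri.
rewrite endR_succ // /endR.
set a := fun d => ~~ inR T tau (i.+1 + d); set F := find a _.
suff /inR_bounds : inR T tau (i + F) by lia.
case: (posnP F) => [-> | F0]; first by rewrite addn0.
have /negbNE : ~~ a F.-1 by apply: (@before_find_iota a (i.+1 + size T).+3); rewrite ltn_predL.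
by rewrite /a addSnnS prednK.
Qed.

Lemma inR_periodic i : 0 < tau -> inR T tau i ->
  [/\ 0 < perj T tau i, 3 * perj T tau i <= tau &
      periodic_on (chr T) i (i + 3 * tau - 1) (perj T tau i)].
Proof.
move=> tau0 /and3P[i0 iT ptau].
have W0 : 0 < size (sub T i (i + 3 * tau - 1)) by rewrite size_sub; lia.
have [p0 /is_period_subP pP] := per_gt0_period W0.
by split => //; apply: pP; lia.
Qed.

Lemma perj_le i q : 0 < i -> i + 3 * tau <= size T + 2 -> 0 < q <= 3 * tau - 1 ->
  periodic_on (chr T) i (i + 3 * tau - 1) q -> perj T tau i <= q.
Proof.
move=> i0 iT q0 /is_period_subP qP; apply: per_le; first by rewrite size_sub; lia.
by apply: qP; lia.
Qed.

Lemma size_Lroot i : 0 < i -> i + 2 * perj T tau i <= size T + 1 ->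
  size (Lroot T tau i) = perj T tau i.
Proof.
rewrite /Lroot; set p := perj T tau i => i0 iT.
have := foldr_lexmin_mem (sub T i (i + p)) [seq sub T (i + t) (i + t + p) | t <- iota 0 p].
rewrite inE => /predU1P[-> | /mapP[t]]; first by rewrite size_sub; lia.
by rewrite mem_iota => /andP[_ tp] ->; rewrite size_sub; lia.
Qed.

Lemma Lroot_succ_of_square i p : perj T tau i = p -> perj T tau i.+1 = p -> 0 < p ->
  sub T i (i + p) = sub T (i + p) (i + p + p) -> Lroot T tau i = Lroot T tau i.+1.
Proof.
move=> pi pi1 p0 sq; rewrite /Lroot pi pi1.
set g := fun t => sub T (i + t) (i + t + p).
have -> : [seq sub T (i.+1 + t) (i.+1 + t + p) | t <- iota 0 p] = map g (iota 1 p).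
  by rewrite (iotaDl 1 0) -map_comp; apply: eq_map => t; rewrite /g /= add1n addnS.
have g_rot : map g (iota 1 p) = rot 1 (map g (iota 0 p)).
  by apply: map_iota1_rot; rewrite /g !addn0.
apply: foldr_lexmin_eq => [||u]; last by rewrite g_rot mem_rot.
  by apply/mapP; exists 0; rewrite ?mem_iota /g ?addn0.
by apply/mapP; exists 1; rewrite ?mem_iota /g ?addn1; try lia.
Qed.

Lemma Ltail_succ_of_period i :
  Lroot T tau i = Lroot T tau i.+1 -> endR T tau i = endR T tau i.+1 -> 0 < i ->
  0 < size (Lroot T tau i) -> i + 2 * size (Lroot T tau i) < endR T tau i <= size T + 1 ->
  chr T i = chr T (i + size (Lroot T tau i)) -> Ltail T tau i = Ltail T tau i.+1.
Proof.
rewrite /Ltail => <- <-; set H := Lroot T tau i; set E := endR T tau i => i0 H0 iE xH.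
have sizeS : size (sub T i.+1 E) = E - i.+1 by rewrite size_sub; lia.
have -> : sub T i E = nth 0 (sub T i.+1 E) (size H).-1 :: sub T i.+1 E.
  by rewrite sub_cons ?nth_sub ?xH; [congr (chr _ _ :: _)|..]; lia.
apply: eq_find => c; apply/decomp_hasP/decomp_hasP => // -[a [k dec]].
  by apply: decomp_behead dec; lia.
by apply: decomp_cons dec; lia.
Qed.
End Runs.

Section ConsecutivePositions.
Variables (T : seq nat) (tau i : nat).
Hypotheses (tau_gt0 : 0 < tau) (Ri : inR T tau i) (Ri1 : inR T tau i.+1).

Lemma perj_succ : perj T tau i = perj T tau i.+1.
Proof.
have [i0 iT] := inR_bounds Ri; have [_ i1T] := inR_bounds Ri1.
have [p0 p3 P] := inR_periodic tau_gt0 Ri; have [q0 q3 Q] := inR_periodic tau_gt0 Ri1.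
have wE : i.+1 + 3 * tau - 1 = (i + 3 * tau - 1).+1 by lia.
rewrite wE in Q; apply/eqP; rewrite eqn_leq; apply/andP; split.
  by apply: perj_le; try lia; apply: (periodic_on_pred p0 _ P Q); lia.
by apply: perj_le; try lia; rewrite wE; apply: (periodic_on_succ q0 _ P Q); lia.
Qed.

Lemma Lroot_succ : Lroot T tau i = Lroot T tau i.+1.
Proof.
have [i0 iT] := inR_bounds Ri; have [p0 p3 P] := inR_periodic tau_gt0 Ri.
apply: Lroot_succ_of_square (esym perj_succ) p0 _ => //.
by apply: sub_square P; lia.
Qed.

Lemma Ltail_succ : Ltail T tau i = Ltail T tau i.+1.
Proof.
have [i0 iT] := inR_bounds Ri; have [p0 p3 P] := inR_periodic tau_gt0 Ri.
have sizeH : size (Lroot T tau i) = perj T tau i by apply: size_Lroot; lia.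
have iE := endR_bounds Ri.
apply: Ltail_succ_of_period; rewrite ?sizeH; try lia.
- exact: Lroot_succ.
- exact: endR_succ.
- by apply: P; lia.
Qed.
End ConsecutivePositions.

Theorem lemma5p12 (sigma n : nat) (T : seq nat) (mu : R) :
  size T = n ->
  all (fun c => c < sigma) T ->
  2 <= sigma -> sigma ^ 7 < n ->
  Rlt 0 mu -> Rlt mu (Rdiv 1 6) ->
  1 <= tau_of mu sigma n ->
  forall j : nat,
    inR T (tau_of mu sigma n) j -> ~~ inR' T (tau_of mu sigma n) j ->
    let tau := tau_of mu sigma n in
    [/\ Lroot T tau j.-1 = Lroot T tau j,
        endR T tau j.-1 = endR T tau j,
        Ltail T tau j.-1 = Ltail T tau j,
        efull T tau j.-1 = efull T tau j &
        typeR T tau j.-1 = typeR T tau j].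
Proof.
move=> _ _ _ _ _ _ tau_gt0 j Rj notR'j tau.
have Rj1 : inR T tau j.-1 by move: notR'j; rewrite /inR' Rj negbK.
case: j Rj Rj1 {notR'j} => [/inR_bounds[] // | i Ri1 Ri /=].
have eE := endR_succ Ri; have eL := Lroot_succ tau_gt0 Ri Ri1.
have eT := Ltail_succ tau_gt0 Ri Ri1.
by split; rewrite /efull /typeR ?eE ?eL ?eT.
Qed.
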